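(* Let $P$ be a finite poset, $I\in\mathcal{IC}(P)$, and let $x$ be a maximal element of $P$ or a minimal element of $P$. If $x\in I$, then $x\notin\mathrm{Row}(I)$.
   Context: All posets are finite. For a poset $P$, a subset $I\subseteq P$ is interval-closed if for all $x,y\in I$ and $z\in P$ with $x\le z\le y$ we have $z\in I$; $\mathcal{IC}(P)$ is the set of interval-closed subsets of $P$. For $x\in P$ the toggle $t_x:\mathcal{IC}(P)\to\mathcal{IC}(P)$ is defined by $t_x(I)=I\triangle\{x\}$ if $I\triangle\{x\}\in\mathcal{IC}(P)$ and $t_x(I)=I$ otherwise. Rowmotion is $\mathrm{Row}=t_{x_1}\circ t_{x_2}\circ\cdots\circ t_{x_N}:\mathcal{IC}(P)\to\mathcal{IC}(P)$, where $(x_1,\dots,x_N)$ is a linear extension of $P$ (so elements are toggled from the top of the poset down); this does not depend on the choice of linear extension. *)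

From mathcomp Require Import all_boot all_order.
Set Implicit Arguments. Unset Strict Implicit. Unset Printing Implicit Defensive.
Import Order.Theory.
Local Open Scope order_scope.

Section IC.
Context {d : Order.disp_t} {P : finPOrderType d}.

Definition interval_closed (I : {set P}) : bool :=
  [forall x, forall y, forall z,
     [&& x \in I, y \in I, x <= z & z <= y] ==> (z \in I)].

Definition toggle (x : P) (I : {set P}) : {set P} :=
  let J := if x \in I then I :\ x else x |: I in
  if interval_closed J then J else I.

Definition linear_extension (s : seq P) : Prop :=
  [/\ uniq s, forall x : P, x \in s &
      forall x y : P, x < y -> index x s < (index y s)%N].

(* Row = t_{x_1} o t_{x_2} o ... o t_{x_N}  (t_{x_N} applied first) *)
Definition rowmotion (s : seq P) (I : {set P}) : {set P} :=
  foldr toggle I s.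

Definition maximal (x : P) : Prop := forall y : P, ~~ (x < y).
Definition minimal (x : P) : Prop := forall y : P, ~~ (y < x).
End IC.

From mathcomp Require Import all_boot all_order.
Import Order.Theory.
Local Open Scope order_scope.

(* Write the linear extension as s = s1 ++ x :: s2.  Since
   s is duplicate-free, x occurs neither in s1 nor in s2, and toggling an
   element y <> x never changes whether x belongs to a set.  Hence x still
   belongs to J = t_{s2}(I) when t_x is applied, and x stays out of the final
   result after t_{s1} is applied.  Moreover every toggle preserves
   interval-closedness, so J is interval-closed; and removing an extremal
   (maximal or minimal) element from an interval-closed set leaves it
   interval-closed, because such an element can only be an endpoint of an
   interval, never a strict interior point.  So t_x really removes x from J. *)

Section Toggles.
Context {d : Order.disp_t} {P : finPOrderType d}.

Lemma interval_closedP (J : {set P}) :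
  reflect (forall a b z, a \in J -> b \in J -> a <= z -> z <= b -> z \in J)
          (interval_closed J).
Proof.
apply: (iffP forallP) => [IC a b z aJ bJ az zb | IC a].
  by move/forallP: (IC a) => /(_ b)/forallP/(_ z); rewrite aJ bJ az zb.
apply/forallP => b; apply/forallP => z; apply/implyP.
by case/and4P; apply: IC.
Qed.

(* An extremal element of an interval-closed set can be removed without
   breaking interval-closedness: it is never strictly inside an interval. *)
Lemma interval_closed_remove_extremal (J : {set P}) (x : P) :
  interval_closed J -> maximal x \/ minimal x -> interval_closed (J :\ x).
Proof.
move=> /interval_closedP IC ext; apply/interval_closedP => a b z.
rewrite !in_setD1 => /andP[xa aJ] /andP[xb bJ] az zb.
rewrite (IC a b z) // andbT; apply/eqP => zx; subst z.
case: ext => [x_max | x_min].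
  by move: (x_max b); rewrite lt_def xb zb.
by move: (x_min a); rewrite lt_def eq_sym xa az.
Qed.

Lemma toggle_interval_closed (y : P) (J : {set P}) :
  interval_closed J -> interval_closed (toggle y J).
Proof. by rewrite /toggle; case: ifP. Qed.

Lemma mem_toggle_other (x y : P) (J : {set P}) :
  y != x -> (x \in toggle y J) = (x \in J).
Proof.
move=> yx; rewrite /toggle; case: (y \in J); case: ifP => _ //.
  by rewrite in_setD1 eq_sym yx.
by rewrite in_setU1 eq_sym (negbTE yx).
Qed.

Lemma toggle_extremal_removes (x : P) (J : {set P}) :
  interval_closed J -> maximal x \/ minimal x ->
  x \in J -> x \notin toggle x J.
Proof.
move=> IC ext xJ; rewrite /toggle xJ.
by rewrite interval_closed_remove_extremal // setD11.
Qed.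

Lemma foldr_toggle_interval_closed (s : seq P) (J : {set P}) :
  interval_closed J -> interval_closed (foldr toggle J s).
Proof.
by elim: s => //= y s IH IC; apply/toggle_interval_closed/IH.
Qed.

Lemma mem_foldr_toggle_notin (x : P) (s : seq P) (J : {set P}) :
  x \notin s -> (x \in foldr toggle J s) = (x \in J).
Proof.
elim: s => //= y s IH; rewrite in_cons negb_or => /andP[xy xs].
by rewrite mem_toggle_other 1?eq_sym // IH.
Qed.

End Toggles.

Theorem lemma2p13 (d : Order.disp_t) (P : finPOrderType d) (s : seq P)
  (I : {set P}) (x : P) :
  linear_extension s -> interval_closed I ->
  maximal x \/ minimal x ->
  x \in I -> x \notin rowmotion s I.
Proof.
case=> s_uniq s_all _ IC ext xI; rewrite /rowmotion.
case/splitPr: (s_all x) s_uniq => s1 s2.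
rewrite cat_uniq /= => /and3P[_ x_notin_s1 /andP[x_notin_s2 _]].
have {}x_notin_s1 : x \notin s1 by apply: contra x_notin_s1 => ->.
rewrite foldr_cat /= mem_foldr_toggle_notin //.
apply: toggle_extremal_removes => //; first exact: foldr_toggle_interval_closed.
by rewrite mem_foldr_toggle_notin.
Qed.
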